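(* Let $X$ be a non-empty finite set and let $f,g\colon X\to X$ be maps. Then $d_X(f\circ g,\mathrm{Id}_X)=d_X(g\circ f,\mathrm{Id}_X)$.
   Context: $d_X$ denotes the Hamming metric on maps $X\to X$: $d_X(h,k)=|\{x\in X : h(x)\ne k(x)\}|/|X|$. *)

From mathcomp Require Import all_boot all_order all_algebra.
Set Implicit Arguments. Unset Strict Implicit. Unset Printing Implicit Defensive.
Import GRing.Theory Num.Theory.
Local Open Scope ring_scope.

Definition hamming_dist (X : finType) (h k : X -> X) : rat :=
  (#|[set x : X | h x != k x]|)%:R / (#|X|)%:R.

From mathcomp Require Import all_boot all_order all_algebra.

(* [g] maps the fixed points of [f \o g] injectively into those of [g \o f]
   (with left inverse [f]), and symmetrically; so both maps have equally many
   fixed points, hence equally many non-fixed points. *)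

Lemma card_fix_comp_le (X : finType) (f g : X -> X) :
  #|[set x | f (g x) == x]| <= #|[set x | g (f x) == x]|.
Proof.
have g_inj : {in [set x | f (g x) == x] &, injective g}.
  by move=> x y; rewrite !inE => /eqP fgx /eqP fgy gxy; rewrite -fgx -fgy gxy.
rewrite -(card_in_imset g_inj); apply/subset_leq_card/subsetP => y /imsetP[x].
by rewrite !inE => /eqP fgx ->; rewrite fgx.
Qed.

Lemma card_nonfix_comm (X : finType) (f g : X -> X) :
  #|[set x | f (g x) != x]| = #|[set x | g (f x) != x]|.
Proof.
have nonfixE (h : X -> X) : [set x | h x != x] = ~: [set x | h x == x].
  by apply/setP => x; rewrite !inE.
have card_fix : #|[set x | f (g x) == x]| = #|[set x | g (f x) == x]|.
  by apply/eqP; rewrite eqn_leq !card_fix_comp_le.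
rewrite (nonfixE (f \o g)) (nonfixE (g \o f)).
by apply/(@addnI #|[set x | f (g x) == x]|); rewrite cardsC card_fix cardsC.
Qed.

Theorem lemma5p2 (X : finType) (x0 : X) (f g : X -> X) :
  hamming_dist (f \o g) id = hamming_dist (g \o f) id.
Proof. by rewrite /hamming_dist /= card_nonfix_comm. Qed.
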